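(* Let $G$ be a finite simple graph with an initial configuration $c_0:V(G)\to\mathbb{Z}$ and let $(c_t)_{t\ge0}$ be the configurations of the diffusion process. If a vertex $v$ is unbounded, then there exists $u\in N(v)$ that is also unbounded.
   Context: Diffusion process: $c_{t+1}(u)=c_t(u)-|\{w\in N(u): c_t(u)>c_t(w)\}|+|\{w\in N(u): c_t(u)<c_t(w)\}|$ for all $u$ simultaneously. A vertex $v$ is bounded if there exist integers $m\le M$ with $m\le c_t(v)\le M$ for all $t\ge0$, and unbounded otherwise. *)

From mathcomp Require Import all_boot all_order all_algebra.
Set Implicit Arguments. Unset Strict Implicit. Unset Printing Implicit Defensive.
Import Order.TTheory GRing.Theory Num.Theory.
Local Open Scope ring_scope.

(* A finite simple graph: vertex set a finType, adjacency a symmetric,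
   irreflexive boolean relation. N(u) = [set w | e u w]. *)
Definition simple_graph (T : finType) (e : rel T) : Prop :=
  symmetric e /\ irreflexive e.

Definition diffuse_step (T : finType) (e : rel T) (c : T -> int) : T -> int :=
  fun u => c u - (#|[set w | e u w & c w < c u]|)%:Z
               + (#|[set w | e u w & c u < c w]|)%:Z.

Definition config (T : finType) (e : rel T) (c0 : T -> int) (t : nat) : T -> int :=
  iter t (diffuse_step e) c0.

Definition bounded_vertex (T : finType) (e : rel T) (c0 : T -> int) (v : T) : Prop :=
  exists m M : int, m <= M /\ forall t : nat, m <= config e c0 t v <= M.

(** If every neighbour of [v] stays in [[m, M]], then [c_t(v)] can only rise
    while [c_t(v) <= M], by at most one per neighbour and step, and it cannot
    rise above [M] since all neighbours are then below it; so [c_t(v)] never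
    exceeds [max(c_0(v), M + |V|)].  Negating the configuration swaps the two
    counts of the process, which gives the lower bound by symmetry.  Finitely
    many bounded neighbours have common bounds, so a vertex whose neighbours
    are all bounded is bounded. *)

From mathcomp Require Import all_boot all_order all_algebra.
From mathcomp Require Import zify.
From Stdlib Require Import Classical.
Set Implicit Arguments. Unset Strict Implicit. Unset Printing Implicit Defensive.
Import Order.TTheory GRing.Theory Num.Theory.
Local Open Scope ring_scope.

Section Diffusion.

Variables (T : finType) (e : rel T).

Lemma diffuse_step_le_max (c : T -> int) (v : T) (M : int) :
  (forall w, e v w -> c w <= M) ->
  diffuse_step e c v <= Num.max (c v) (M + #|T|%:Z).
Proof.
move=> leM; rewrite /diffuse_step.
set up := #|[set w | e v w & c v < c w]|.
have up_le : (up <= #|T|)%N := max_card _.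
case: (lerP (c v) M) => [cvM | Mcv].
- by rewrite le_max; apply/orP; right; lia.
have up0 : up = 0%N.
  apply/eqP; rewrite cards_eq0 -subset0; apply/subsetP => w.
  by rewrite !inE => /andP[/leM wM]; rewrite ltNge (le_trans wM (ltW Mcv)).
by rewrite le_max up0; apply/orP; left; lia.
Qed.

Lemma diffuse_stepN (c : T -> int) (v : T) :
  diffuse_step e (fun u => - c u) v = - diffuse_step e c v.
Proof.
rewrite /diffuse_step.
have -> : [set w | e v w & - c w < - c v] = [set w | e v w & c v < c w].
  by apply/setP => w; rewrite !inE ltrN2.
have -> : [set w | e v w & - c v < - c w] = [set w | e v w & c w < c v].
  by apply/setP => w; rewrite !inE ltrN2.
by rewrite !opprD opprK addrAC.
Qed.

Lemma diffuse_step_ge_min (c : T -> int) (v : T) (m : int) :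
  (forall w, e v w -> m <= c w) ->
  Num.min (c v) (m - #|T|%:Z) <= diffuse_step e c v.
Proof.
move=> gem; rewrite -[diffuse_step _ _ _]opprK -diffuse_stepN lerNr.
have := @diffuse_step_le_max (fun u => - c u) v (- m).
rewrite oppr_min opprB addrC; apply=> w /gem.
by rewrite lerN2.
Qed.

Variable c0 : T -> int.

Lemma configS (t : nat) : config e c0 t.+1 = diffuse_step e (config e c0 t).
Proof. by []. Qed.

Lemma bounded_of_bounded_neighbours (v : T) (m M : int) :
  (forall w t, e v w -> m <= config e c0 t w <= M) -> bounded_vertex e c0 v.
Proof.
move=> nbhs.
exists (Num.min (c0 v) (m - #|T|%:Z)), (Num.max (c0 v) (M + #|T|%:Z)).
split; first by rewrite ge_min le_max lexx.
elim=> [|t /andP[lo hi]]; first by rewrite ge_min le_max !lexx.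
rewrite configS; apply/andP; split.
- apply: le_trans (diffuse_step_ge_min (m := m) _); last by move=> w /(nbhs w t)/andP[].
  by rewrite le_min lo ge_min lexx orbT.
- apply: le_trans (diffuse_step_le_max (M := M) _) _; first by move=> w /(nbhs w t)/andP[].
  by rewrite ge_max hi le_max lexx orbT.
Qed.

Lemma bounded_vertices_uniformly (s : seq T) :
  (forall u, u \in s -> bounded_vertex e c0 u) ->
  exists m M : int, forall u t, u \in s -> m <= config e c0 t u <= M.
Proof.
elim: s => [|x s IH] bnd; first by exists 0, 0.
have [m [M bnd_s]] := IH (fun u us => bnd u (mem_behead (s := x :: s) us)).
have [mx [Mx [_ bnd_x]]] := bnd x (mem_head x s).
exists (Num.min m mx), (Num.max M Mx) => u t; rewrite inE => /predU1P[-> | us].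
- by have /andP[lo hi] := bnd_x t; rewrite ge_min le_max lo hi !orbT.
- by have /andP[lo hi] := bnd_s u t us; rewrite ge_min le_max lo hi.
Qed.

End Diffusion.

Theorem lemma5 (T : finType) (e : rel T) (c0 : T -> int) (v : T) :
  simple_graph e ->
  ~ bounded_vertex e c0 v ->
  exists u : T, e v u /\ ~ bounded_vertex e c0 u.
Proof.
move=> _ unbounded_v; apply: NNPP => no_unbounded_nbh; apply: unbounded_v.
have bounded_nbhs u : u \in [seq w <- enum T | e v w] -> bounded_vertex e c0 u.
  rewrite mem_filter => /andP[evu _].
  by apply: NNPP => unbounded_u; apply: no_unbounded_nbh; exists u.
have [m [M bnd]] := bounded_vertices_uniformly bounded_nbhs.
apply: (@bounded_of_bounded_neighbours _ _ _ _ m M) => w t evw.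
by apply: bnd; rewrite mem_filter evw mem_enum.
Qed.
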